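(* The intersection graph of any Sperner family is isomorphic to an induced subgraph of the difference graph $\mathcal{D}(G)$ for some cyclic group $G$ of squarefree order.
   Context: A Sperner family is a family $\mathcal{F}$ of subsets of a finite set $X$ such that for any two distinct $F_1,F_2\in\mathcal{F}$ we have $F_1\not\subseteq F_2$. The intersection graph of $\mathcal{F}$ has vertex set $\mathcal{F}$, two distinct members adjacent iff they intersect. For a finite group $G$ with identity $e$: the intersection power graph $\mathcal{G}_I(G)$ has vertex set $G$, two distinct non-identity vertices $x,y$ being adjacent iff $\langle x\rangle\cap\langle y\rangle\neq\{e\}$, and $e$ adjacent to every other vertex; the power graph $\mathcal{P}(G)$ has vertex set $G$, two distinct vertices adjacent iff one is a power of the other; the difference graph $\mathcal{D}(G)$ has edge set $E(\mathcal{G}_I(G))\setminus E(\mathcal{P}(G))$ on vertex set $G$, with all isolated vertices removed. *)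

From mathcomp Require Import all_boot all_fingroup all_solvable.
Set Implicit Arguments. Unset Strict Implicit. Unset Printing Implicit Defensive.
Local Open Scope group_scope.

Definition squarefree (n : nat) : Prop :=
  0 < n /\ forall p, prime p -> ~~ (p ^ 2 %| n)%N.

Definition sperner (T : finType) (F : {set {set T}}) : Prop :=
  forall A B, A \in F -> B \in F -> A != B -> ~~ (A \subset B).

Definition inter_adj (T : finType) (A B : {set T}) : bool :=
  (A != B) && (A :&: B != set0).

Definition ipg_adj (gT : finGroupType) (x y : gT) : bool :=
  (x != y) && [|| x == 1, y == 1 | <[x]> :&: <[y]> != 1].

Definition pg_adj (gT : finGroupType) (x y : gT) : bool :=
  (x != y) && ((x \in <[y]>) || (y \in <[x]>)).

Definition diff_adj (gT : finGroupType) (x y : gT) : bool :=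
  ipg_adj x y && ~~ pg_adj x y.

(* vertex set of D(G): non-isolated vertices of G under diff_adj *)
Definition diff_vertex (gT : finGroupType) (G : {set gT}) (x : gT) : bool :=
  (x \in G) && [exists y in G, diff_adj x y].

From mathcomp Require Import all_boot all_fingroup all_solvable zmodp.
Set Implicit Arguments. Unset Strict Implicit. Unset Printing Implicit Defensive.
Local Open Scope group_scope.

(* Give each point [i] of a finite ground set a distinct prime [p i] and send a
   set [S] to the element of order [prod_(i in S) p i] in a cyclic group of
   order [prod_i p i].  In a cyclic group [x \in <[y]>] iff [#[x] %| #[y]], and
   [<[x]> :&: <[y]>] has order [gcdn #[x] #[y]]; so two such elements are
   adjacent in D(G) exactly when their sets meet but are incomparable, which for
   distinct members of a Sperner family means that they intersect.  For every
   member to be a vertex of D(G) it must overlap some set: after doubling each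
   point, a set containing [a] overlaps [{(a, false), spare point}], and the
   empty set (a member only when F = {set0}) is sent to a set of spare points. *)

Definition overlap (T : finType) (A B : {set T}) : bool :=
  [&& A :&: B != set0, ~~ (A \subset B) & ~~ (B \subset A)].

Lemma sperner_nonempty (T : finType) (F : {set {set T}}) A B :
  sperner F -> A \in F -> B \in F -> A != B -> (A != set0) && (B != set0).
Proof.
move=> spF AF BF neAB.
have ne0 X Y : X \in F -> Y \in F -> X != Y -> X != set0.
  by move=> XF YF neXY; apply: contraNneq (spF X Y XF YF neXY) => ->; rewrite sub0set.
by rewrite (ne0 A B) // (ne0 B A) // eq_sym.
Qed.

Lemma sperner_inter_adj (T : finType) (F : {set {set T}}) A B :
  sperner F -> A \in F -> B \in F -> A != B -> inter_adj A B = overlap A B.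
Proof.
move=> spF AF BF neAB; rewrite /inter_adj /overlap neAB.
by rewrite (spF A B AF BF neAB) (spF B A BF AF) 1?eq_sym // !andbT.
Qed.

Lemma orderX_cofactor (gT : finGroupType) (x : gT) d :
  (d %| #[x])%N -> #[x ^+ (#[x] %/ d)] = d.
Proof. by move=> dvd_dx; rewrite orderXdiv ?dvdn_div // divnA // mulKn. Qed.

Section CyclicGroup.
Variables (gT : finGroupType) (G : {group gT}).
Hypothesis cycG : cyclic G.

Lemma mem_cycle_cyclic x y : x \in G -> y \in G -> (x \in <[y]>) = (#[x] %| #[y])%N.
Proof. by move=> Gx Gy; rewrite -cycle_subG -(cardSg_cyclic cycG) ?cycle_subG. Qed.

Lemma card_cycleI_cyclic x y : x \in G -> y \in G ->
  #|<[x]> :&: <[y]>| = gcdn #[x] #[y].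
Proof.
move=> Gx Gy; set z := x ^+ (#[x] %/ gcdn #[x] #[y]).
have oz : #[z] = gcdn #[x] #[y] by rewrite orderX_cofactor ?dvdn_gcdl.
have zy : z \in <[y]> by rewrite mem_cycle_cyclic ?groupX // oz dvdn_gcdr.
apply/eqP; rewrite eqn_dvd dvdn_gcd !cardSg ?subsetIl ?subsetIr //=.
by rewrite -oz cardSg // subsetI !cycle_subG mem_cycle zy.
Qed.

Lemma diff_adj_cyclic x y : x \in G -> y \in G ->
  diff_adj x y = [&& 1 < gcdn #[x] #[y], ~~ (#[x] %| #[y]) & ~~ (#[y] %| #[x])]%N.
Proof.
move=> Gx Gy; rewrite /diff_adj /ipg_adj /pg_adj !mem_cycle_cyclic //.
rewrite trivg_card1 card_cycleI_cyclic // eqn_leq gcdn_gt0 order_gt0 andbT -ltnNge.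
have [<- | neqxy] := eqVneq x y; first by rewrite dvdnn !andbF.
have [-> | x_neq1] := eqVneq x 1; first by rewrite order1 dvd1n /= andbF.
have [-> | y_neq1] := eqVneq y 1; first by rewrite order1 dvd1n orbT /= !andbF.
by rewrite /= negb_or.
Qed.

End CyclicGroup.

Section PrimeProducts.
Variables (I : finType) (p : I -> nat).
Hypotheses (p_prime : forall i, prime (p i)) (p_inj : injective p).

Definition prodp (S : {set I}) : nat := \prod_(i in S) p i.

Lemma prodp_gt0 S : 0 < prodp S.
Proof. by apply: prodn_gt0 => i; rewrite prime_gt0. Qed.

Lemma prime_dvd_prodp q S : prime q -> (q %| prodp S) = [exists i in S, q == p i].
Proof.
move=> q_prime; rewrite Euclid_dvd_prod // big_orE.
by apply: eq_existsb => i; rewrite dvdn_prime2.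
Qed.

Lemma dvdn_prime_prodp i S : (p i %| prodp S) = (i \in S).
Proof.
rewrite prime_dvd_prodp //; apply/existsP/idP => [[j /andP[jS /eqP/p_inj ->]] //|].
by exists i; rewrite eqxx andbT.
Qed.

Lemma dvdn_prodp S1 S2 : (prodp S1 %| prodp S2) = (S1 \subset S2).
Proof.
apply/idP/subsetP => [dvd12 i iS1 | sub12].
  by rewrite -dvdn_prime_prodp (dvdn_trans _ dvd12) ?dvdn_prime_prodp.
rewrite /prodp [X in _ %| X](big_setID S1) /=.
by rewrite (setIidPr _) ?dvdn_mulr //; apply/subsetP.
Qed.

Lemma gcdn_prodp_gt1 S1 S2 : (1 < gcdn (prodp S1) (prodp S2)) = (S1 :&: S2 != set0).
Proof.
apply/idP/set0Pn => [gt1 | [i]].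
  have q_prime := pdiv_prime gt1; move: (pdiv_dvd (gcdn (prodp S1) (prodp S2))).
  rewrite dvdn_gcd => /andP[]; rewrite !prime_dvd_prodp //.
  move=> /exists_inP[i iS1 /eqP->] /exists_inP[j jS2 /eqP/p_inj ij].
  by exists i; rewrite inE iS1 ij.
rewrite inE => /andP[iS1 iS2].
have dvd_pi : p i %| gcdn (prodp S1) (prodp S2) by rewrite dvdn_gcd !dvdn_prime_prodp iS1.
apply: leq_trans (prime_gt1 (p_prime i)) (dvdn_leq _ dvd_pi).
by rewrite gcdn_gt0 prodp_gt0.
Qed.

Lemma squarefree_prodp S : squarefree (prodp S).
Proof.
split=> [|q q_prime]; first exact: prodp_gt0.
apply/negP => sq_dvd; have /dvdn_trans/(_ sq_dvd) : q %| q ^ 2 by rewrite dvdn_exp.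
rewrite prime_dvd_prodp // => /exists_inP[i iS /eqP def_q].
move: sq_dvd; rewrite def_q /prodp (big_setD1 i iS) /= expnS expn1.
by rewrite dvdn_pmul2l ?prime_gt0 // dvdn_prime_prodp !inE eqxx.
Qed.

Section ProductElement.
Variables (gT : finGroupType) (g : gT).
Hypothesis og : #[g] = prodp [set: I].

Definition prodp_elem (S : {set I}) : gT := g ^+ (#[g] %/ prodp S).

Lemma prodp_elem_cycle S : prodp_elem S \in <[g]>.
Proof. exact: mem_cycle. Qed.

Lemma order_prodp_elem S : #[prodp_elem S] = prodp S.
Proof. by rewrite orderX_cofactor // og dvdn_prodp subsetT. Qed.

Lemma prodp_elem_inj : injective prodp_elem.
Proof.
move=> S1 S2 /(congr1 order); rewrite !order_prodp_elem => eq12.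
by apply/eqP; rewrite eqEsubset -!dvdn_prodp eq12 dvdnn.
Qed.

Lemma diff_adj_prodp_elem S1 S2 :
  diff_adj (prodp_elem S1) (prodp_elem S2) = overlap S1 S2.
Proof.
rewrite (diff_adj_cyclic (cycle_cyclic g)) ?prodp_elem_cycle //.
by rewrite !order_prodp_elem gcdn_prodp_gt1 !dvdn_prodp.
Qed.

Lemma diff_vertex_prodp_elem S S' : overlap S S' -> diff_vertex <[g]> (prodp_elem S).
Proof.
move=> ovSS'; rewrite /diff_vertex prodp_elem_cycle; apply/exists_inP.
by exists (prodp_elem S'); rewrite ?prodp_elem_cycle ?diff_adj_prodp_elem.
Qed.

End ProductElement.
End PrimeProducts.

Fixpoint prime_chain k := if k is k'.+1 then s2val (prime_above (prime_chain k')) else 2.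

Lemma prime_chain_prime k : prime (prime_chain k).
Proof. by case: k => [|k] //=; case: prime_above. Qed.

Lemma prime_chain_inj : injective prime_chain.
Proof.
by apply/incn_inj/leq_mono/(homo_ltn ltn_trans) => k /=; case: prime_above.
Qed.

Lemma exists_elem_of_order n : 0 < n -> exists (gT : finGroupType) (g : gT), #[g] = n.
Proof. by move=> n_gt0; exists 'I_n.-1.+1, Zp1; rewrite order_Zp1 prednK. Qed.

Section Encoding.
Variable T : finType.
Local Notation I := ((T * bool) + option bool)%type.

Definition doubled (A : {set T}) : {set I} :=
  [set x | if x is inl tb then tb.1 \in A else false].

Lemma doubled_subset A B : (doubled A \subset doubled B) = (A \subset B).
Proof.
apply/subsetP/subsetP => [sub t tA | sub [[t b]|k]]; rewrite ?inE //=.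
  by have := sub (inl (t, true)); rewrite !inE; apply.
exact: sub.
Qed.

Lemma doubled_meet A B : (doubled A :&: doubled B != set0) = (A :&: B != set0).
Proof.
apply/set0Pn/set0Pn => [[[[t b]|k]] | [t]]; rewrite !inE //= => ABt.
  by exists t; rewrite inE.
by exists (inl (t, true)); rewrite !inE.
Qed.

Lemma doubled_inj : injective doubled.
Proof. by move=> A B eqAB; apply/eqP; rewrite eqEsubset -!doubled_subset eqAB subxx. Qed.

(* The spare points give the empty set an image that still overlaps some set. *)
Definition code (A : {set T}) : {set I} :=
  if A == set0 then [set inr None; inr (Some false)] else doubled A.

Lemma overlap_code A B : A != set0 -> B != set0 -> overlap (code A) (code B) = overlap A B.
Proof. by rewrite /code /overlap => /negbTE-> /negbTE->; rewrite doubled_meet !doubled_subset. Qed.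

Lemma code_overlapping A : exists B, overlap (code A) B.
Proof.
rewrite /code /overlap; have [_ | /set0Pn[a aA]] := eqVneq A set0.
  exists [set inr (Some false); inr (Some true)]; apply/and3P; split.
  - by apply/set0Pn; exists (inr (Some false)); rewrite !inE eqxx orbT.
  - by apply/subsetPn; exists (inr None); rewrite !inE.
  - by apply/subsetPn; exists (inr (Some true)); rewrite !inE.
exists [set inl (a, false); inr None]; apply/and3P; split.
- by apply/set0Pn; exists (inl (a, false)); rewrite !inE eqxx aA.
- by apply/subsetPn; exists (inl (a, true)); rewrite !inE //= !eqE /= xpair_eqE andbF.
- by apply/subsetPn; exists (inr None); rewrite !inE ?eqxx ?orbT.
Qed.

End Encoding.

Theorem proposition3p10 (T : finType) (F : {set {set T}}) :
  sperner F ->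
  exists (gT : finGroupType) (G : {group gT}),
    [/\ cyclic G, squarefree #|G| &
      exists f : {set T} -> gT,
        [/\ {in F &, injective f},
            (forall A, A \in F -> diff_vertex G (f A)) &
            {in F &, forall A B, inter_adj A B = diff_adj (f A) (f B)}]].
Proof.
move=> spF; pose p (i : (T * bool) + option bool) := prime_chain (enum_rank i).
have p_prime i : prime (p i) by apply: prime_chain_prime.
have p_inj : injective p by move=> i j /prime_chain_inj/ord_inj/enum_rank_inj.
have [gT [g og]] := exists_elem_of_order (prodp_gt0 p_prime [set: _]).
exists gT, <[g]>%G; split; first exact: cycle_cyclic.
  by rewrite /= -orderE og; apply: squarefree_prodp.
exists (fun A => prodp_elem p g (code A)); split.
- move=> A B AF BF; have [//|neAB] := eqVneq A B.
  have /andP[nA nB] := sperner_nonempty spF AF BF neAB.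
  by rewrite /code (negbTE nA) (negbTE nB) => /(prodp_elem_inj p_prime p_inj og)/doubled_inj.
- by move=> A _; have [B ovAB] := code_overlapping A; apply: diff_vertex_prodp_elem ovAB.
move=> A B AF BF; have [<- | neAB] := eqVneq A B.
  by rewrite /inter_adj /diff_adj /ipg_adj !eqxx.
have /andP[nA nB] := sperner_nonempty spF AF BF neAB.
by rewrite (diff_adj_prodp_elem p_prime p_inj og) overlap_code // (sperner_inter_adj spF).
Qed.
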